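(* Let $\mathrm K$ be a field with a discrete valuation $\nu$, residue field $\mathrm k$ and uniformizer $\pi$, and let $\mathrm{Sp}=\mathrm{Sp}_{\nu,\pi}\colon\mathcal A_\bullet(\mathrm K)\to\mathcal A_\bullet(\mathrm k)$. Then for every $(x_0,\dots,x_n)\in\mathcal A_n(\mathrm K)$, $$\Delta\big(\mathrm{Sp}(x_0,\dots,x_n)\big)=\sum_{j\in\mathbb Z/(n+1)}\sum_{i=1}^{n-1}\mathrm{Sp}(x_j,x_{j+1},\dots,x_{j+i})\wedge\mathrm{Sp}(x_j,x_{j+i+1},\dots,x_{j+n}).$$ That is, $\Delta\circ\mathrm{Sp}=(\mathrm{Sp}\wedge\mathrm{Sp})\circ\Delta$.
   Context: For a field $\mathrm F$ and $n\ge1$, let $\mathcal A_n(\mathrm F)$ be the $\mathbb Q$-vector space generated by tuples $(x_0,\dots,x_n)\in\mathrm F^{n+1}$ modulo the relations $(x_0,x_1,\dots,x_n)=(x_1,\dots,x_n,x_0)$ and $(x,\dots,x)=0$. Set $\mathcal A_\bullet=\bigoplus_{n\ge1}\mathcal A_n$. The cobracket $\Delta\colon\mathcal A_\bullet\to\Lambda^2\mathcal A_\bullet$ is $$\Delta(x_0,\dots,x_n)=\sum_{j\in\mathbb Z/(n+1)}\sum_{i=1}^{n-1}(x_j,x_{j+1},\dots,x_{j+i})\wedge(x_j,x_{j+i+1},\dots,x_{j+n}),$$ with indices taken mod $n+1$. Specialization: put $m=\min_j\nu(x_j)$. Then $\mathrm{Sp}_{\nu,\pi}(x_0,\dots,x_n)=(y_0,\dots,y_n)$,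 where $y_i$ is the residue class in $\mathrm k$ of $x_i\pi^{-m}$ if $\nu(x_i)=m$, and $y_i=0$ if $\nu(x_i)>m$. Each sub-tuple on the right-hand side of the claim is specialized using its own minimum valuation. *)

From HB Require Import structures.
From mathcomp Require Import all_boot all_order all_algebra.
Set Implicit Arguments. Unset Strict Implicit. Unset Printing Implicit Defensive.
Import Order.TTheory GRing.Theory Num.Theory.
Local Open Scope ring_scope.

(** * Discrete valuation data.
    [nu] is the valuation on K^x (its value at 0 is irrelevant: nu 0 = +oo by
    convention, handled by explicit tests [x != 0]); [pi] a uniformizer;
    [res] restricted to the valuation ring O is a surjective ring morphism
    O -> k whose kernel is the maximal ideal, i.e. k is the residue field. *)
Definition in_O (K : fieldType) (nu : K -> int) (x : K) : bool :=
  (x == 0) || (0 <= nu x).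

Record dvr_data (K k : fieldType) (nu : K -> int) (res : K -> k) (pi : K)
  : Prop := DvrData {
  nuM : forall x y, x != 0 -> y != 0 -> nu (x * y) = nu x + nu y;
  nuD : forall x y, x != 0 -> y != 0 -> x + y != 0 ->
          Num.min (nu x) (nu y) <= nu (x + y);
  pi_neq0 : pi != 0;
  nu_pi : nu pi = 1;
  resD : forall x y, in_O nu x -> in_O nu y -> res (x + y) = res x + res y;
  resM : forall x y, in_O nu x -> in_O nu y -> res (x * y) = res x * res y;
  res1 : res 1 = 1;
  res_eq0 : forall x, in_O nu x -> (res x == 0) = ((x == 0) || (0 < nu x));
  res_surj : forall a : k, exists2 x, in_O nu x & res x = a
}.

(** minimum of the valuations of the nonzero entries (None = +oo) *)
Fixpoint minv (K : fieldType) (nu : K -> int) (s : seq K) : option int :=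
  match s with
  | [::] => None
  | x :: s' =>
      if x == 0 then minv nu s'
      else Some (match minv nu s' with
                 | None => nu x
                 | Some m => Num.min (nu x) m end)
  end.

Definition Sp (K k : fieldType) (nu : K -> int) (res : K -> k) (pi : K)
  (s : seq K) : seq k :=
  match minv nu s with
  | None => map (fun _ => 0) s
  | Some m => map (fun x => if (x != 0) && (nu x == m)
                            then res (x * pi ^ (- m)) else 0) s
  end.

Definition cyc (T : nmodType) (x : seq T) (j : nat) (idx : seq nat) : seq T :=
  [seq nth 0 x ((j + t) %% size x) | t <- idx].

Definition sub1 (T : nmodType) (x : seq T) (j i : nat) : seq T :=
  cyc x j (iota 0 i.+1).
(** (x_j, x_{j+i+1}, ..., x_{j+n}) where size x = n+1 *)
Definition sub2 (T : nmodType) (x : seq T) (j i : nat) : seq T :=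
  cyc x j (0%N :: iota i.+1 ((size x).-1 - i)).

(** An element of the free Q-space on pairs (a,b) is represented by its
    coefficient function (seq T * seq T) -> rat; [pt a b] is the basis
    element of the pair (a,b), i.e. the formal symbol a /\ b. *)
Definition pt (T : eqType) (a b : seq T) : (seq T * seq T) -> rat :=
  fun p => if p == (a, b) then 1 else 0.

(** Generators of the relations defining Lambda^2 A_bullet(T) as a quotient
    of the free Q-space on pairs of tuples of length >= 2:
    antisymmetry, alternation, and the relations of A_bullet (cyclic
    invariance, constant tuples = 0) in either slot. *)
Inductive wrel (T : eqType) : ((seq T * seq T) -> rat) -> Prop :=
| wrel_sym a b : (1 < size a)%N -> (1 < size b)%N ->
    wrel (fun p => pt a b p + pt b a p)
| wrel_alt a : (1 < size a)%N -> wrel (pt a a)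
| wrel_rotl a b : (1 < size a)%N -> (1 < size b)%N ->
    wrel (fun p => pt (rot 1 a) b p - pt a b p)
| wrel_rotr a b : (1 < size a)%N -> (1 < size b)%N ->
    wrel (fun p => pt a (rot 1 b) p - pt a b p)
| wrel_constl (x : T) m b : (1 < m)%N -> (1 < size b)%N ->
    wrel (pt (nseq m x) b)
| wrel_constr a (x : T) m : (1 < size a)%N -> (1 < m)%N ->
    wrel (pt a (nseq m x)).

Definition in_wrel_span (T : eqType) (f : (seq T * seq T) -> rat) : Prop :=
  exists l : seq (rat * ((seq T * seq T) -> rat)),
    (forall i, (i < size l)%N -> wrel (nth (0, fun _ => 0) l i).2) /\
    forall p, f p = \sum_(t <- l) t.1 * t.2 p.

Definition wedge_eq (T : eqType) (f g : (seq T * seq T) -> rat) : Prop :=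
  in_wrel_span (fun p => f p - g p).

Definition Delta (T : nmodType) (x : seq T) : (seq T * seq T) -> rat :=
  fun p => \sum_(j < size x) \sum_(1 <= i < (size x).-1)
             pt (sub1 x j i) (sub2 x j i) p.

From mathcomp Require Import all_boot all_order all_algebra zify.
Import Order.TTheory GRing.Theory Num.Theory.
Local Open Scope ring_scope.
Set Implicit Arguments. Unset Strict Implicit. Unset Printing Implicit Defensive.

(* Write y = Sp x. If a sub-tuple of y is not identically zero, the corresponding
   sub-tuple of x contains an entry of minimal valuation, so it specializes to
   that sub-tuple of y. Hence the (j,i)-th terms of both sides agree, except
   when a slot of the left term (a sub-tuple of y) vanishes; the left term is
   then a relation. The right terms a /\ b with y_j = ... = y_{j+i} = 0 are
   matched bijectively by (j,i) |-> (j+i, n-i) with those whose second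
   sub-tuple of y vanishes, which read b /\ rot_i a; each pair is a relation.
   If both sub-tuples of y vanish then x = 0 and every term is a relation. *)

Section Span.
Variable T : eqType.
Local Notation span := (@in_wrel_span T).

Lemma wrel_span0 : span (fun _ => 0).
Proof. by exists [::]; split=> // p; rewrite big_nil. Qed.

Lemma eq_wrel_span f g : f =1 g -> span f -> span g.
Proof. by move=> fg [l [Hl El]]; exists l; split=> // p; rewrite -fg. Qed.

Lemma wrel_spanW f : wrel f -> span f.
Proof. by move=> Hf; exists [:: (1, f)]; split=> [[]|p] //; rewrite big_seq1 mul1r. Qed.

Lemma wrel_spanD f g : span f -> span g -> span (fun p => f p + g p).
Proof.
move=> [l1 [H1 E1]] [l2 [H2 E2]]; exists (l1 ++ l2); split=> [i|p].
  rewrite size_cat nth_cat.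
  case: (ltnP i (size l1)) => [lti _|le_l1i lti]; first exact: H1.
  by apply: H2; rewrite ltn_subLR.
by rewrite big_cat E1 E2.
Qed.

Lemma wrel_spanZ c f : span f -> span (fun p => c * f p).
Proof.
move=> [l [Hl El]]; exists [seq (c * t.1, t.2) | t <- l]; split=> [i|p].
  by rewrite size_map => lti; rewrite (nth_map (0, fun _ => 0)) //; apply: Hl.
by rewrite big_map El mulr_sumr; apply: eq_bigr => t _; rewrite mulrA.
Qed.

Lemma wrel_spanB f g : span f -> span g -> span (fun p => f p - g p).
Proof.
move=> Sf /(wrel_spanZ (-1)) Sg; apply: eq_wrel_span (wrel_spanD Sf Sg) => p.
by rewrite mulN1r.
Qed.

Lemma wrel_span_sum (I : eqType) (r : seq I) (P : pred I)
    (F : I -> seq T * seq T -> rat) :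
  (forall i, i \in r -> P i -> span (F i)) ->
  span (fun p => \sum_(i <- r | P i) F i p).
Proof.
elim: r => [|a r IHr] SF.
  by apply: eq_wrel_span wrel_span0 => p; rewrite big_nil.
have {}IHr : span (fun p => \sum_(i <- r | P i) F i p).
  by apply: IHr => i ri; apply: SF; rewrite inE ri orbT.
case Pa: (P a); last by apply: eq_wrel_span IHr => p; rewrite big_cons Pa.
apply: eq_wrel_span (wrel_spanD (SF a (mem_head a r) Pa) IHr) => p.
by rewrite big_cons Pa.
Qed.

Lemma wrel_span_const_l (c : T) a b : (1 < size a)%N -> (1 < size b)%N ->
  all (pred1 c) a -> span (pt a b).
Proof. by move=> a2 b2 /all_pred1P ->; apply/wrel_spanW/wrel_constl. Qed.

Lemma wrel_span_const_r (c : T) a b : (1 < size a)%N -> (1 < size b)%N ->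
  all (pred1 c) b -> span (pt a b).
Proof. by move=> a2 b2 /all_pred1P ->; apply/wrel_spanW/wrel_constr. Qed.

Lemma wrel_span_rotr a b m : (1 < size a)%N -> (1 < size b)%N ->
  span (fun p => pt a (rot m b) p - pt a b p).
Proof.
move=> a2 b2; elim: m => [|m IHm].
  by apply: eq_wrel_span wrel_span0 => p; rewrite rot0 subrr.
have [/rot_oversize->|ltmb] := leqP (size b) m.+1.
  by apply: eq_wrel_span wrel_span0 => p; rewrite subrr.
have step : span (fun p => pt a (rot 1 (rot m b)) p - pt a (rot m b) p).
  by apply/wrel_spanW/wrel_rotr; rewrite ?size_rot.
apply: eq_wrel_span (wrel_spanD step IHm) => p.
by rewrite /= -rotS ?addrA ?subrK // ltnW.
Qed.

End Span.

Lemma cyc_map (T1 T2 : nmodType) (f : T1 -> T2) (x : seq T1) a L :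
  f 0 = 0 -> cyc (map f x) a L = map f (cyc x a L).
Proof.
move=> f0; rewrite /cyc size_map -map_comp; apply: eq_map => t /=.
have [lt_tx|le_xt] := ltnP ((a + t) %% size x)%N (size x).
  by rewrite (nth_map 0).
by rewrite !nth_default ?size_map.
Qed.

Section CyclicSubtuples.
Variable T : nmodType.
Implicit Types (z : seq T) (P : pred T).
Local Open Scope nat_scope.

Lemma all_cyc P z a L : P 0%R -> all P z -> all P (cyc z a L).
Proof.
move=> P0 /allP zP; apply/allP => _ /mapP [t _ ->].
by have [/(mem_nth 0%R)/zP|/(nth_default 0%R)->] := ltnP ((a + t) %% size z) (size z).
Qed.

Lemma cyc_sub z a L : 0 < size z -> {subset cyc z a L <= z}.
Proof. by move=> z_gt0 _ /mapP [t _ ->]; rewrite mem_nth ?ltn_pmod. Qed.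

Lemma mem_cyc_iota z a : {subset z <= cyc z a (iota 0 (size z))}.
Proof.
move=> _ /(nthP 0%R) [q ltqz <-]; set N := size z in ltqz *.
have N_gt0 : 0 < N := leq_ltn_trans (leq0n q) ltqz.
have ltaN : a %% N < N := ltn_pmod a N_gt0.
rewrite /cyc -/N; apply/mapP; exists ((q + (N - a %% N)) %% N).
  by rewrite mem_iota ltn_pmod.
rewrite modnDmr {1}(divn_eq a N) -addnA modnMDl.
have -> : a %% N + (q + (N - a %% N)) = q + N by lia.
by rewrite modnDr modn_small.
Qed.

Lemma sub1_cat_sub2 z j i : i < size z ->
  sub1 z j i ++ behead (sub2 z j i) = cyc z j (iota 0 (size z)).
Proof.
rewrite /sub1 /sub2 /cyc /=; case: (size z) => // N; rewrite ltnS => leiN.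
by rewrite -map_cat -iotaD /= subnKC.
Qed.

Lemma all_sub1_sub2 P z j i : i < size z ->
  all P (sub1 z j i) -> all P (sub2 z j i) -> all P z.
Proof.
move=> ltiz P1 P2; apply/allP => w /(mem_cyc_iota j).
rewrite -(sub1_cat_sub2 j ltiz) mem_cat => /orP [w_in|/mem_behead w_in].
  exact: (allP P1).
exact: (allP P2).
Qed.

Lemma size_sub1 z j i : size (sub1 z j i) = i.+1.
Proof. by rewrite size_map size_iota. Qed.

Lemma size_sub2 z j i : size (sub2 z j i) = ((size z).-1 - i).+1.
Proof. by rewrite size_map /= size_iota. Qed.

Variables (z : seq T) (n i j : nat).
Hypotheses (size_z : size z = n.+1) (le_in : i <= n).
Let j' := (j + i) %% n.+1.

Lemma sub1_shift :
  sub1 z j' (n - i) = nth 0%R z ((j + i) %% n.+1) :: behead (sub2 z j i).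
Proof.
rewrite /sub1 /sub2 /cyc size_z /j' /= addn0 modn_mod; congr cons.
rewrite -(addn1 i) iotaDl -map_comp; apply: eq_map => t /=.
by rewrite modnDml addnA.
Qed.

Lemma sub2_shift : sub2 z j' (n - i) = rot i (sub1 z j i).
Proof.
have rot_iota : rot i (iota 0 i.+1) = i :: iota 0 i.
  by rewrite -addn1 iotaD -{1}(size_iota 0 i) rot_size_cat.
rewrite /sub1 /sub2 /cyc -map_rot rot_iota size_z /j' /= addn0 modn_mod subKn //.
congr cons; rewrite -[(n - i).+1]addn0 iotaDl -map_comp; apply: eq_map => t /=.
rewrite modnDml; have -> : j + i + ((n - i).+1 + t) = j + t + n.+1 by lia.
by rewrite modnDr.
Qed.

End CyclicSubtuples.

Section MinValuation.
Variables (K : fieldType) (nu : K -> int).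

Lemma minv_eqNone s : (minv nu s == None) = all (pred1 0) s.
Proof. by elim: s => [|z s IHs] //=; case: ifP. Qed.

Lemma minv_NoneP s : minv nu s = None -> {in s, forall z, z = 0}.
Proof. by move/eqP; rewrite minv_eqNone => /allP s0 z /s0 /eqP. Qed.

Lemma minv_SomeP s m : minv nu s = Some m ->
  (exists2 z, z \in s & (z != 0) && (nu z == m)) /\
  {in s, forall z, z != 0 -> m <= nu z}.
Proof.
elim: s m => [|z s IHs] m //=; case: ifPn => [/eqP-> /IHs [[w ws wm] s_ge]|z0].
  split; first by exists w; rewrite // inE ws orbT.
  by move=> u; rewrite inE => /predU1P [->|/s_ge//]; rewrite eqxx.
case Es: (minv nu s) => [m'|] [<-]; last first.
  split; first by exists z; rewrite ?mem_head ?z0 /=.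
  by move=> u; rewrite inE => /predU1P [-> //|/(minv_NoneP Es)->]; rewrite eqxx.
have [[w ws /andP [w0 /eqP wm]] s_ge] := IHs _ Es.
split.
  have [le_zm'|lt_m'z] := leP (nu z) m'.
    by exists z; rewrite ?mem_head ?z0 /=.
  by exists w; rewrite ?inE ?ws ?orbT ?w0 ?wm /=.
move=> u; rewrite inE => /predU1P [->|us] u0; first by rewrite ge_min lexx.
by rewrite ge_min s_ge ?orbT.
Qed.

Lemma minv_sub t s m : {subset t <= s} -> minv nu s = Some m ->
  (exists2 z, z \in t & (z != 0) && (nu z == m)) -> minv nu t = Some m.
Proof.
move=> ts Es [z zt /andP [z0 /eqP zm]]; have [_ s_ge] := minv_SomeP Es.
case Et: (minv nu t) => [m'|]; last by rewrite (minv_NoneP Et zt) eqxx in z0.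
have [[w wt /andP [w0 /eqP wm]] t_ge] := minv_SomeP Et.
by congr Some; apply/le_anti; rewrite -{1}zm t_ge // -wm s_ge ?ts.
Qed.

Lemma eq_minv s t : s =i t -> minv nu s = minv nu t.
Proof.
move=> st; case Es: (minv nu s) => [m|].
  have [[z zs zm] _] := minv_SomeP Es.
  by symmetry; apply: (minv_sub _ Es) => [u|]; [rewrite st | exists z; rewrite -?st].
case Et: (minv nu t) => [m|] //; have [[z zt /andP [z0 _]] _] := minv_SomeP Et.
by move: z0; rewrite (minv_NoneP Es (_ : z \in s)) ?eqxx ?st.
Qed.

End MinValuation.

Section Specialization.
Variables (K k : fieldType) (nu : K -> int) (res : K -> k) (pi : K).
Hypothesis dvr : dvr_data nu res pi.
Local Notation Sp := (Sp nu res pi).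

Definition sp_entry (o : option int) (z : K) : k :=
  if o is Some m then
    if (z != 0) && (nu z == m) then res (z * pi ^ (- m)) else 0
  else 0.

Lemma Sp_map s : Sp s = map (sp_entry (minv nu s)) s.
Proof. by rewrite /Sp; case: (minv nu s). Qed.

Lemma size_Sp s : size (Sp s) = size s.
Proof. by rewrite Sp_map size_map. Qed.

Lemma sp_entry0 o : sp_entry o 0 = 0.
Proof. by case: o => //= m; rewrite eqxx. Qed.

Lemma nu1 : nu 1 = 0.
Proof. by apply: (@addrI _ (nu 1)); rewrite -(nuM dvr) ?oner_neq0 // mulr1 addr0. Qed.

Lemma nu_exprz (m : int) : nu (pi ^ m) = m.
Proof.
have pi0 := pi_neq0 dvr.
have nu_expr (n : nat) : nu (pi ^+ n) = n.
  elim: n => [|n IHn]; first by rewrite expr0 nu1.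
  by rewrite exprS (nuM dvr) ?expf_neq0 // IHn (nu_pi dvr) -add1n PoszD.
case: m => n; first by rewrite -exprnP nu_expr.
rewrite NegzE; have := nuM dvr (expfz_neq0 (- n.+1%:Z) pi0) (expf_neq0 n.+1 pi0).
rewrite nu_expr exprnP -expfzDr // addNr expr0z nu1 => /eqP.
by rewrite eq_sym addr_eq0 => /eqP.
Qed.

Lemma sp_entry_eq0 m z : (sp_entry (Some m) z == 0) = (z == 0) || (nu z != m).
Proof.
rewrite /=; case: (z =P 0) => [->|/eqP z0]; first by rewrite eqxx.
case: (nu z =P m) => [zm|]; last by rewrite eqxx.
have w0 : z * pi ^ (- m) != 0 by rewrite mulf_neq0 ?expfz_neq0 ?(pi_neq0 dvr).
have nu_w : nu (z * pi ^ (- m)) = 0.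
  by rewrite (nuM dvr) ?expfz_neq0 ?(pi_neq0 dvr) // nu_exprz zm subrr.
by rewrite /= (res_eq0 dvr) /in_O nu_w ?lexx ?orbT // (negbTE w0) ltxx.
Qed.

Lemma Sp_eq0 s : all (pred1 0) (Sp s) = all (pred1 0) s.
Proof.
rewrite Sp_map; case Es: (minv nu s) => [m|]; last first.
  rewrite -(minv_eqNone nu s) Es eqxx.
  by apply: (introT allP) => _ /mapP [z _ ->] /=.
have [[z zs /andP [z0 /eqP zm]] _] := minv_SomeP Es.
apply/idP/idP => /allP s0; last by rewrite (eqP (s0 z zs)) eqxx in z0.
have := s0 _ (map_f (sp_entry (Some m)) zs).
by rewrite /= sp_entry_eq0 (negbTE z0) zm eqxx.
Qed.

Lemma Sp_sub t s : {subset t <= s} ->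
  ~~ all (pred1 0) (map (sp_entry (minv nu s)) t) ->
  Sp t = map (sp_entry (minv nu s)) t.
Proof.
move=> ts; case Es: (minv nu s) => [m|]; last first.
  by case/allPn=> _ /mapP [z _ ->]; rewrite /= eqxx.
case/allPn=> _ /mapP [z zt ->]; rewrite /= sp_entry_eq0 negb_or negbK => zm.
by rewrite Sp_map (minv_sub ts Es) //; exists z.
Qed.

Lemma Sp_rot i s : Sp (rot i s) = rot i (Sp s).
Proof. by rewrite !Sp_map map_rot (eq_minv nu (mem_rot i s)). Qed.

(* A sub-tuple of x containing an entry of minimal valuation has the same
   minimal valuation as x. *)
Lemma Sp_cyc x a L : ~~ all (pred1 0) (cyc (Sp x) a L) ->
  Sp (cyc x a L) = cyc (Sp x) a L.
Proof.
case: x => [|w x] nz; first by case/negP: nz; apply: all_cyc; rewrite /= ?eqxx.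
rewrite [in RHS]Sp_map cyc_map ?sp_entry0 //; apply: Sp_sub; first exact: cyc_sub.
by rewrite -cyc_map ?sp_entry0 // -Sp_map.
Qed.

End Specialization.

Lemma sum_cyclic_shift (V : nmodType) n (F : nat -> nat -> V) :
  \sum_(j < n.+1) \sum_(1 <= i < n) F ((j + i) %% n.+1)%N (n - i)%N =
  \sum_(j < n.+1) \sum_(1 <= i < n) F j i.
Proof.
rewrite exchange_big [RHS]exchange_big [RHS]big_nat_rev /=.
apply: eq_bigr => i _; rewrite add1n subSS.
rewrite [RHS](reindex_inj (addrI (inZp i : 'I_n.+1))) /=.
by apply: eq_bigr => j _; rewrite modnDml addnC.
Qed.

Lemma sum_cyclic_pairing (V : nmodType) n (B1 B2 : nat -> nat -> bool)
    (F : nat -> nat -> V) :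
  (forall j i, (0 < i < n)%N -> B2 ((j + i) %% n.+1)%N (n - i)%N = B1 j i) ->
  \sum_(j < n.+1) \sum_(1 <= i < n)
     ((if B1 j i then F j i else 0) + (if B2 j i then F j i else 0)) =
  \sum_(j < n.+1) \sum_(1 <= i < n)
     (if B1 j i then F j i + F ((j + i) %% n.+1)%N (n - i)%N else 0).
Proof.
move=> B21; under eq_bigr => j _ do rewrite big_split /=; rewrite big_split /=.
rewrite -(sum_cyclic_shift n (fun j i => if B2 j i then F j i else 0)) -big_split.
apply: eq_bigr => j _; rewrite -big_split; apply: eq_big_nat => i i_range /=.
by rewrite B21 //; case: (B1 j i); rewrite ?addr0.
Qed.

Section Cobracket.
Variables (K k : fieldType) (nu : K -> int) (res : K -> k) (pi : K).
Hypothesis dvr : dvr_data nu res pi.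
Variables (n : nat) (x : seq K).
Hypothesis size_x : size x = n.+1.
Local Notation Sp := (Sp nu res pi).
Local Notation span := (@in_wrel_span k).

Let y := Sp x.
Let size_y : size y = n.+1. Proof. by rewrite size_Sp. Qed.
Let shift j i := ((j + i) %% n.+1)%N.
Let lhs_term j i := pt (sub1 y j i) (sub2 y j i).
Let rhs_term j i := pt (Sp (sub1 x j i)) (Sp (sub2 x j i)).
Let vanish1 j i := all (pred1 0) (sub1 y j i).
Let vanish2 j i := all (pred1 0) (sub2 y j i).

Lemma Sp_sub1 j i : ~~ vanish1 j i -> Sp (sub1 x j i) = sub1 y j i.
Proof. exact: Sp_cyc. Qed.

Lemma Sp_sub2 j i : ~~ vanish2 j i -> Sp (sub2 x j i) = sub2 y j i.
Proof. by rewrite /vanish2 /sub2 size_y -size_x; apply: Sp_cyc. Qed.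

Lemma x_eq0_of_vanish12 j i : (i <= n)%N -> vanish1 j i -> vanish2 j i -> all (pred1 0) x.
Proof.
by move=> le_in V1 V2; rewrite -(Sp_eq0 dvr) (all_sub1_sub2 _ V1 V2) ?size_y.
Qed.

Lemma rhs_term_span_of_x_eq0 j i :
  (0 < i < n)%N -> all (pred1 0) x -> span (rhs_term j i).
Proof.
case/andP=> i_gt0 lt_in x0; apply: (wrel_span_const_l (c := 0)).
- by rewrite size_Sp size_sub1.
- by rewrite size_Sp size_sub2 size_x ltnS subn_gt0.
- by rewrite Sp_eq0 //; apply: all_cyc x0; rewrite /= eqxx.
Qed.

Lemma lhs_term_span_vanish1 j i : (0 < i < n)%N -> vanish1 j i -> span (lhs_term j i).
Proof.
case/andP=> i_gt0 lt_in; apply: wrel_span_const_l; rewrite ?size_sub1 //.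
by rewrite size_sub2 size_y ltnS subn_gt0.
Qed.

Lemma lhs_term_span_vanish2 j i : (0 < i < n)%N -> vanish2 j i -> span (lhs_term j i).
Proof.
case/andP=> i_gt0 lt_in; apply: wrel_span_const_r; rewrite ?size_sub1 //.
by rewrite size_sub2 size_y ltnS subn_gt0.
Qed.

Lemma lhs_rhs_term_span j i : (0 < i < n)%N ->
  span (fun p => lhs_term j i p - rhs_term j i p
    + ((if vanish1 j i then rhs_term j i p else 0)
       + (if vanish2 j i then rhs_term j i p else 0))).
Proof.
move=> i_range; have le_in : (i <= n)%N by case/andP: i_range => _ /ltnW.
case V1: (vanish1 j i); case V2: (vanish2 j i).
- have x0 := x_eq0_of_vanish12 le_in V1 V2.
  apply: eq_wrel_span (wrel_spanD (lhs_term_span_vanish1 i_range V1)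
                                  (rhs_term_span_of_x_eq0 j i_range x0)) => p /=.
  by rewrite addrA subrK.
- apply: eq_wrel_span (lhs_term_span_vanish1 i_range V1) => p /=.
  by rewrite addr0 subrK.
- apply: eq_wrel_span (lhs_term_span_vanish2 i_range V2) => p /=.
  by rewrite add0r subrK.
- apply: eq_wrel_span (@wrel_span0 k) => p /=.
  by rewrite /lhs_term /rhs_term Sp_sub1 ?V1 // Sp_sub2 ?V2 // subrr !addr0.
Qed.

Lemma vanish2_shift j i : (i <= n)%N -> vanish2 (shift j i) (n - i) = vanish1 j i.
Proof.
by move=> le_in; rewrite /vanish2 /shift sub2_shift // (eq_all_r (mem_rot i _)).
Qed.

Lemma rhs_term_shift_span j i : (0 < i < n)%N -> vanish1 j i ->
  span (fun p => rhs_term j i p + rhs_term (shift j i) (n - i) p).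
Proof.
move=> i_range V1; have /andP [i_gt0 lt_in] := i_range; have le_in := ltnW lt_in.
have ni_range : (0 < n - i < n)%N by apply/andP; split; lia.
have [V2|V2] := boolP (vanish2 j i).
  have x0 := x_eq0_of_vanish12 le_in V1 V2.
  exact: wrel_spanD (rhs_term_span_of_x_eq0 _ i_range x0)
                    (rhs_term_span_of_x_eq0 _ ni_range x0).
have sub1_shift_y : sub1 y (shift j i) (n - i) = sub2 y j i.
  have yj0 t : (t <= i)%N -> nth 0 y ((j + t) %% size y) = 0.
    move=> le_ti; apply/eqP/(allP V1).
    by rewrite (map_f (fun t => nth 0 y ((j + t) %% size y))) ?mem_iota.
  have sub2_head : sub2 y j i = nth 0 y ((j + 0) %% size y) :: behead (sub2 y j i)
    by [].
  by rewrite /shift sub1_shift // -size_y [in RHS]sub2_head !yj0.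
have V1_shift : ~~ vanish1 (shift j i) (n - i) by rewrite /vanish1 sub1_shift_y.
set a := Sp (sub1 x j i); set b := sub2 y j i.
have Sp_sub2_shift : Sp (sub2 x (shift j i) (n - i)) = rot i a.
  by rewrite sub2_shift // Sp_rot.
have Sp_sub1_shift : Sp (sub1 x (shift j i) (n - i)) = b by rewrite Sp_sub1.
have a2 : (1 < size a)%N by rewrite size_Sp size_sub1.
have b2 : (1 < size b)%N by rewrite size_sub2 size_y ltnS subn_gt0.
apply: eq_wrel_span (wrel_spanD (wrel_span_rotr i b2 a2) (wrel_spanW (wrel_sym a2 b2))).
move=> p; rewrite /rhs_term /= Sp_sub2 // Sp_sub1_shift Sp_sub2_shift -/a -/b.
by rewrite addrCA subrK.
Qed.

Lemma Delta_Sp_span :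
  span (fun p => \sum_(j < n.+1) \sum_(1 <= i < n) (lhs_term j i p - rhs_term j i p)).
Proof.
have span_corrected : span (fun p => \sum_(j < n.+1) \sum_(1 <= i < n)
    (lhs_term j i p - rhs_term j i p
     + ((if vanish1 j i then rhs_term j i p else 0)
        + (if vanish2 j i then rhs_term j i p else 0)))).
  apply: wrel_span_sum => j _ _; apply: wrel_span_sum => i.
  by rewrite mem_index_iota => i_range _; apply: lhs_rhs_term_span.
have span_paired : span (fun p => \sum_(j < n.+1) \sum_(1 <= i < n)
    (if vanish1 j i then rhs_term j i p + rhs_term (shift j i) (n - i) p else 0)).
  apply: wrel_span_sum => j _ _; apply: wrel_span_sum => i.
  rewrite mem_index_iota => i_range _; case V1: (vanish1 j i).
    exact: rhs_term_shift_span.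
  exact: wrel_span0.
have vanish_shift j i : (0 < i < n)%N -> vanish2 (shift j i) (n - i) = vanish1 j i.
  by case/andP=> _ /ltnW; apply: vanish2_shift.
have span_corr := eq_wrel_span (fun p =>
  esym (sum_cyclic_pairing (fun j i => rhs_term j i p) vanish_shift)) span_paired.
apply: eq_wrel_span (wrel_spanB span_corrected span_corr) => p /=.
rewrite -sumrB; apply: eq_bigr => j _.
by rewrite -sumrB; apply: eq_bigr => i _; rewrite addrK.
Qed.

End Cobracket.

Theorem lemma2p1 (K k : fieldType) (nu : K -> int) (res : K -> k) (pi : K)
  (Hdvr : dvr_data nu res pi) (n : nat) (x : seq K) :
  (1 <= n)%N -> size x = n.+1 ->
  wedge_eq (Delta (Sp nu res pi x))
    (fun p => \sum_(j < n.+1) \sum_(1 <= i < n)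
        pt (Sp nu res pi (sub1 x j i)) (Sp nu res pi (sub2 x j i)) p).
Proof.
(* For n = 0 both sides are empty sums. *)
move=> _ size_x; rewrite /wedge_eq /Delta size_Sp size_x /=.
apply: eq_wrel_span (Delta_Sp_span Hdvr size_x) => p.
by rewrite -sumrB; apply: eq_bigr => j _; rewrite -sumrB.
Qed.
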